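(* Let $\mathcal D$ be universal, $\mathrm M=(M,d)\in\mathfrak U_{\mathcal D}$, $A\subseteq M$ finite and nonempty, and $\mathfrak s,\mathfrak t$ Katětov functions of $\mathrm M$ with $\operatorname{dom}(\mathfrak s)=\operatorname{dom}(\mathfrak t)=A$. Then $$d(\mathfrak s,\mathfrak t)=\Big\{m\in\mathcal D:\ \max_{x\in A}|\mathfrak s(x)-\mathfrak t(x)|\le m\le\min_{x\in A}\big(\mathfrak s(x)+\mathfrak t(x)\big)\Big\}.$$
   Context: $\mathcal D$ is a finite subset of $\mathbb R_{\ge0}$ containing $0$. $\mathfrak U_{\mathcal D}$ is the class of countable homogeneous metric spaces (every isometry between finite subspaces extends to an isometry of the space onto itself) with distance set exactly $\mathcal D$ into which every finite metric space with distances in $\mathcal D$ embeds isometrically; $\mathcal D$ is universal if this class is nonempty. A Katětov function of $\mathrm M$ is a map $\mathfrak t:F\to\mathcal D\setminus\{0\}$, $F\subseteq M$ finite, with $|\mathfrak t(x)-\mathfrak t(y)|\le d(x,y)\le\mathfrak t(x)+\mathfrak t(y)$ for all $x,y\in F$; $\operatorname{orb}(\mathfrak t)=\{y\in M\setminus F: d(y,x)=\mathfrak t(x)\ \forall x\in F\}$. For Katětov functions $\mathfrak s,\mathfrak t$: $d(\mathfrak s,\mathfrak t)=\{d(x,y): x\in\operatorname{orb}(\mathfrak s),\ y\in\operatorname{orb}(\mathfrak t)\}$. *)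

From Stdlib Require Import Reals List.
Import ListNotations.
Open Scope R_scope.

Definition valid_distset (D : list R) : Prop :=
  In 0 D /\ (forall m, In m D -> 0 <= m).

Definition is_metric {X : Type} (d : X -> X -> R) : Prop :=
  (forall x y, d x y = 0 <-> x = y) /\
  (forall x y, d x y = d y x) /\
  (forall x y z, d x z <= d x y + d y z).

Definition dists_in (D : list R) {X : Type} (d : X -> X -> R) : Prop :=
  forall x y, In (d x y) D.

Definition distset_exactly (D : list R) {X : Type} (d : X -> X -> R) : Prop :=
  dists_in D d /\ (forall m, In m D -> exists x y, d x y = m).

Definition countable_type (X : Type) : Prop :=
  exists f : X -> nat, forall x y, f x = f y -> x = y.

Definition finite_type (X : Type) : Prop :=
  exists l : list X, forall x, In x l.

(* every isometry between finite subspaces (domain F, map f restricted to F)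
   extends to an isometry of the space onto itself *)
Definition homogeneous {X : Type} (d : X -> X -> R) : Prop :=
  forall (F : list X) (f : X -> X),
    (forall x y, In x F -> In y F -> d (f x) (f y) = d x y) ->
    exists g : X -> X,
      (exists h : X -> X, forall x, h (g x) = x /\ g (h x) = x) /\
      (forall x y, d (g x) (g y) = d x y) /\
      (forall x, In x F -> g x = f x).

Definition embeds_all_finite (D : list R) {X : Type} (d : X -> X -> R) : Prop :=
  forall (Y : Type) (e : Y -> Y -> R),
    finite_type Y -> is_metric e -> dists_in D e ->
    exists f : Y -> X, forall y1 y2, d (f y1) (f y2) = e y1 y2.

Definition in_UD (D : list R) (X : Type) (d : X -> X -> R) : Prop :=
  countable_type X /\ is_metric d /\ homogeneous d /\
  distset_exactly D d /\ embeds_all_finite D d.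

Definition universal (D : list R) : Prop :=
  exists (X : Type) (d : X -> X -> R), in_UD D X d.

Definition katetov (D : list R) {X : Type} (d : X -> X -> R)
  (A : list X) (t : X -> R) : Prop :=
  (forall x, In x A -> In (t x) D /\ t x <> 0) /\
  (forall x y, In x A -> In y A ->
     Rabs (t x - t y) <= d x y /\ d x y <= t x + t y).

Definition orb {X : Type} (d : X -> X -> R) (A : list X) (t : X -> R) (y : X) : Prop :=
  ~ In y A /\ (forall x, In x A -> d y x = t x).

Definition in_kat_dist {X : Type} (d : X -> X -> R) (A : list X)
  (s t : X -> R) (m : R) : Prop :=
  exists x y, orb d A s x /\ orb d A t y /\ d x y = m.

Definition max_over {X : Type} (f : X -> R) (A : list X) : R :=
  match A with
  | [] => 0
  | a :: l => fold_right (fun x r => Rmax (f x) r) (f a) l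
  end.

Definition min_over {X : Type} (f : X -> R) (A : list X) : R :=
  match A with
  | [] => 0
  | a :: l => fold_right (fun x r => Rmin (f x) r) (f a) l
  end.

(* A point of d(s,t) sits at distances s x and t x from each x in A, so the triangle
   inequality through x bounds its distances to orb(t).  Conversely, for m in the
   stated range, gluing to A two new points at distances s and t from A and m from each
   other gives a finite metric space with distances in D; it embeds into M, and
   homogeneity moves the embedded copy of A back onto A, which carries the two new
   points into orb(s) and orb(t).  For m = 0 one has s = t and one new point suffices. *)

From Stdlib Require Import Reals List Lra ClassicalEpsilon ProofIrrelevance.
Import ListNotations.
Open Scope R_scope.

Lemma Rabs_le_inv (x b : R) : Rabs x <= b -> - b <= x <= b.
Proof. unfold Rabs; destruct (Rcase_abs x); intros; lra. Qed.

Lemma Rabs_le_0 (x : R) : Rabs x <= 0 -> x = 0.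
Proof. intros H; apply Rabs_le_inv in H; lra. Qed.

Lemma fold_Rmax_le_iff {X : Type} (f : X -> R) (a : X) (l : list X) (m : R) :
  fold_right (fun x r => Rmax (f x) r) (f a) l <= m <-> forall x, In x (a :: l) -> f x <= m.
Proof.
  induction l as [|b l IH]; simpl.
  - split; [intros H x [<-|[]]; exact H | intros H; apply H; now left].
  - split.
    + intros H x Hx.
      assert (Hb : f b <= m) by (eapply Rle_trans; [apply Rmax_l | exact H]).
      assert (Hl : fold_right (fun x r => Rmax (f x) r) (f a) l <= m)
        by (eapply Rle_trans; [apply Rmax_r | exact H]).
      destruct Hx as [<-|[<-|Hx]]; [apply (proj1 IH Hl); now left | exact Hb | apply (proj1 IH Hl); now right].
    + intros H; apply Rmax_lub; [apply H; tauto|].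
      apply IH; intros x [Hx|Hx]; apply H; tauto.
Qed.

Lemma fold_Rmin_ge_iff {X : Type} (f : X -> R) (a : X) (l : list X) (m : R) :
  m <= fold_right (fun x r => Rmin (f x) r) (f a) l <-> forall x, In x (a :: l) -> m <= f x.
Proof.
  induction l as [|b l IH]; simpl.
  - split; [intros H x [<-|[]]; exact H | intros H; apply H; now left].
  - split.
    + intros H x Hx.
      assert (Hb : m <= f b) by (eapply Rle_trans; [exact H | apply Rmin_l]).
      assert (Hl : m <= fold_right (fun x r => Rmin (f x) r) (f a) l)
        by (eapply Rle_trans; [exact H | apply Rmin_r]).
      destruct Hx as [<-|[<-|Hx]]; [apply (proj1 IH Hl); now left | exact Hb | apply (proj1 IH Hl); now right].
    + intros H; apply Rmin_glb; [apply H; tauto|].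
      apply IH; intros x [Hx|Hx]; apply H; tauto.
Qed.

Lemma max_over_le_iff {X : Type} (f : X -> R) (A : list X) (m : R) :
  A <> nil -> (max_over f A <= m <-> forall x, In x A -> f x <= m).
Proof. destruct A as [|a l]; [congruence|]; intros _; apply fold_Rmax_le_iff. Qed.

Lemma le_min_over_iff {X : Type} (f : X -> R) (A : list X) (m : R) :
  A <> nil -> (m <= min_over f A <-> forall x, In x A -> m <= f x).
Proof. destruct A as [|a l]; [congruence|]; intros _; apply fold_Rmin_ge_iff. Qed.

Lemma finite_type_sig_In {X : Type} (A : list X) : finite_type {x | In x A}.
Proof.
  enough (H : forall l, incl l A ->
            exists L : list {x | In x A}, forall z, In (proj1_sig z) l -> In z L).
  { destruct (H A (incl_refl A)) as [L HL]; exists L; intros z; apply HL, proj2_sig. }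
  induction l as [|a l IH]; intros Hincl.
  - exists nil; simpl; tauto.
  - destruct IH as [L HL]; [intros x Hx; apply Hincl; now right|].
    assert (Ha : In a A) by (apply Hincl; now left).
    exists (exist _ a Ha :: L); intros [z Hz] [Heq|Hzl].
    + left; now apply subset_eq_compat.
    + right; exact (HL _ Hzl).
Qed.

Lemma finite_type_sum (X Y : Type) : finite_type X -> finite_type Y -> finite_type (X + Y).
Proof.
  intros [lX HX] [lY HY]; exists (map inl lX ++ map inr lY).
  intros [x|y]; apply in_or_app; [left | right]; apply in_map; auto.
Qed.

Lemma katetov_bounds (D : list R) {X : Type} (d : X -> X -> R) (A : list X) (t : X -> R)
  (x y : X) : katetov D d A t -> In x A -> In y A ->
  t x <= d x y + t y /\ d x y <= t x + t y.
Proof.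
  intros [_ Ht] Hx Hy; destruct (Ht x y Hx Hy) as [Habs Hsum].
  apply Rabs_le_inv in Habs; split; lra.
Qed.

Lemma orb_of_dist (D : list R) {X : Type} (d : X -> X -> R) (A : list X) (t : X -> R)
  (y : X) : is_metric d -> katetov D d A t ->
  (forall x, In x A -> d y x = t x) -> orb d A t y.
Proof.
  intros [d0 _] [Ht _] Hy; split; [|exact Hy].
  intros HyA; apply (proj2 (Ht y HyA)); rewrite <- (Hy y HyA); now apply d0.
Qed.

Lemma in_kat_dist_bounds (D : list R) {X : Type} (d : X -> X -> R) (A : list X)
  (s t : X -> R) (m : R) : is_metric d -> dists_in D d -> in_kat_dist d A s t m ->
  In m D /\ forall a, In a A -> Rabs (s a - t a) <= m /\ m <= s a + t a.
Proof.
  intros [_ [dsym dtri]] Hdin [x [y [[_ Hx] [[_ Hy] <-]]]]; split; [apply Hdin|].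
  intros a Ha; rewrite <- (Hx a Ha), <- (Hy a Ha); split.
  - pose proof (dtri x y a); pose proof (dtri y x a); rewrite (dsym y x) in *.
    apply Rabs_le; lra.
  - rewrite (dsym y a); apply dtri.
Qed.

Section Glue.
Variables (D : list R) (X P : Type) (d : X -> X -> R) (A : list X).
Variables (eP : P -> P -> R) (k : P -> X -> R).

Definition glue (u v : {x | In x A} + P) : R :=
  match u, v with
  | inl a, inl b => d (proj1_sig a) (proj1_sig b)
  | inl a, inr p | inr p, inl a => k p (proj1_sig a)
  | inr p, inr q => eP p q
  end.

Hypothesis d_metric : is_metric d.
Hypothesis eP_metric : is_metric eP.
Hypothesis k_katetov : forall p, katetov D d A (k p).
Hypothesis k_compat : forall p q a, In a A ->
  Rabs (k p a - k q a) <= eP p q /\ eP p q <= k p a + k q a.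

Lemma glue_metric : is_metric glue.
Proof.
  destruct d_metric as [d0 [dsym dtri]], eP_metric as [e0 [esym etri]].
  assert (Hk0 : forall p a, In a A -> k p a <> 0)
    by (intros p a Ha; apply (proj1 (k_katetov p) a Ha)).
  assert (Hk : forall p a b, In a A -> In b A ->
            k p a <= d a b + k p b /\ d a b <= k p a + k p b)
    by (intros p a b Ha Hb; exact (katetov_bounds D d A (k p) a b (k_katetov p) Ha Hb)).
  assert (Hc : forall p q a, In a A -> k p a <= eP p q + k q a /\ eP p q <= k p a + k q a).
  { intros p q a Ha; destruct (k_compat p q a Ha) as [Habs Hsum].
    apply Rabs_le_inv in Habs; split; lra. }
  split; [|split].
  - intros [[a Ha]|p] [[b Hb]|q]; simpl; split; intros H; try discriminate.
    + f_equal; apply subset_eq_compat, d0, H.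
    + injection H as ->; now apply d0.
    + now destruct (Hk0 q a Ha).
    + now destruct (Hk0 p b Hb).
    + f_equal; now apply e0.
    + injection H as ->; now apply e0.
  - intros [[a Ha]|p] [[b Hb]|q]; simpl; auto.
  - intros [[a Ha]|p] [[b Hb]|q] [[c Hc']|r]; simpl.
    + apply dtri.
    + pose proof (Hk r a b Ha Hb); lra.
    + pose proof (Hk q a c Ha Hc'); lra.
    + pose proof (Hc r q a Ha); rewrite (esym r q) in *; lra.
    + pose proof (Hk p c b Hc' Hb); rewrite (dsym c b) in *; lra.
    + pose proof (Hc p r b Hb); lra.
    + pose proof (Hc p q c Hc'); lra.
    + apply etri.
Qed.

Lemma glue_dists_in : dists_in D d -> dists_in D eP -> dists_in D glue.
Proof. intros Hd He [[a Ha]|p] [[b Hb]|q]; simpl; auto; apply k_katetov; auto. Qed.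

End Glue.

(* psi is the inverse of an automorphism extending the partial isometry phi. *)
Lemma homogeneous_pullback {X : Type} (d : X -> X -> R) (F : list X) (phi : X -> X) :
  homogeneous d ->
  (forall x y, In x F -> In y F -> d (phi x) (phi y) = d x y) ->
  exists psi : X -> X, (forall x y, d (psi x) (psi y) = d x y) /\
                       (forall x z, In x F -> d (psi z) x = d z (phi x)).
Proof.
  intros Hhom Hphi; destruct (Hhom F phi Hphi) as [g [[h Hgh] [Hg Hgphi]]].
  exists h; split.
  - intros x y; rewrite <- Hg; now rewrite !(proj2 (Hgh _)).
  - intros x z Hx; rewrite <- Hg, (proj2 (Hgh z)), Hgphi by exact Hx; reflexivity.
Qed.

Section Realization.
Variables (D : list R) (M : Type) (d : M -> M -> R) (A : list M).
Hypothesis D_valid : valid_distset D.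
Hypothesis M_UD : in_UD D M d.

Lemma katetov_family_realized (P : Type) (eP : P -> P -> R) (k : P -> M -> R) :
  finite_type P -> is_metric eP -> dists_in D eP ->
  (forall p, katetov D d A (k p)) ->
  (forall p q a, In a A -> Rabs (k p a - k q a) <= eP p q /\ eP p q <= k p a + k q a) ->
  exists j : P -> M, (forall p q, d (j p) (j q) = eP p q) /\ (forall p, orb d A (k p) (j p)).
Proof.
  intros HP He Hein Hk Hc.
  destruct M_UD as [_ [Hd [Hhom [[Hdin _] Hemb]]]].
  destruct (Hemb _ (glue M P d A eP k)) as [f Hf].
  - apply finite_type_sum; [apply finite_type_sig_In | exact HP].
  - now apply (glue_metric D).
  - now apply glue_dists_in.
  - set (phi := fun x => match excluded_middle_informative (In x A) with
                         | left Hx => f (inl (exist _ x Hx)) | right _ => x end).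
    assert (Hphi : forall x (Hx : In x A), phi x = f (inl (exist _ x Hx))).
    { intros x Hx; unfold phi; destruct excluded_middle_informative;
        [do 3 f_equal; apply proof_irrelevance | contradiction]. }
    destruct (homogeneous_pullback d A phi Hhom) as [psi [Hpsi HpsiA]].
    { intros x y Hx Hy; rewrite (Hphi x Hx), (Hphi y Hy); apply Hf. }
    exists (fun p => psi (f (inr p))); split.
    + intros p q; rewrite Hpsi; apply Hf.
    + intros p; apply (orb_of_dist D); [exact Hd | apply Hk|].
      intros a Ha; rewrite (HpsiA a _ Ha), (Hphi a Ha); apply Hf.
Qed.

Lemma katetov_orb_nonempty (t : M -> R) : katetov D d A t -> exists y, orb d A t y.
Proof.
  intros Ht.
  destruct (katetov_family_realized unit (fun _ _ => 0) (fun _ => t)) as [j [_ Hj]].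
  - exists [tt]; intros []; now left.
  - split; [intros [] []; split; auto; lra | split; intros; lra].
  - intros [] []; apply D_valid.
  - intros _; exact Ht.
  - intros _ _ a Ha; rewrite Rminus_diag, Rabs_R0.
    pose proof (proj2 D_valid _ (proj1 (proj1 Ht a Ha))); split; lra.
  - now exists (j tt).
Qed.

Lemma in_kat_dist_of_bounds (s t : M -> R) (m : R) :
  katetov D d A s -> katetov D d A t -> In m D ->
  (forall a, In a A -> Rabs (s a - t a) <= m /\ m <= s a + t a) ->
  in_kat_dist d A s t m.
Proof.
  intros Hs Ht HmD Hm.
  assert (d0 : forall x, d x x = 0) by (intros x; now apply (proj1 (proj2 M_UD))).
  destruct (Req_dec m 0) as [->|Hm0].
  - destruct (katetov_orb_nonempty s Hs) as [y [HyA Hy]].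
    exists y, y; split; [now split|split; [split; [exact HyA|]|apply d0]].
    intros a Ha; rewrite (Hy a Ha); apply Rminus_diag_uniq, Rabs_le_0, Hm, Ha.
  - set (eP := fun p q : bool => if Bool.eqb p q then 0 else m).
    destruct (katetov_family_realized bool eP (fun p => if p then s else t))
      as [j [Hjj Hj]].
    + exists [true; false]; intros []; simpl; auto.
    + pose proof (proj2 D_valid m HmD); unfold eP; split; [|split].
      * intros [] []; simpl; split; intros; congruence.
      * intros [] []; reflexivity.
      * intros [] [] []; simpl; lra.
    + intros [] []; apply D_valid || exact HmD.
    + intros []; assumption.
    + intros p q a Ha; unfold eP.
      pose proof (proj2 D_valid _ (proj1 (proj1 Hs a Ha))).
      pose proof (proj2 D_valid _ (proj1 (proj1 Ht a Ha))).
      destruct p, q; simpl; rewrite ?Rminus_diag, ?Rabs_R0.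
      * split; lra.
      * apply Hm, Ha.
      * rewrite Rabs_minus_sym, Rplus_comm; apply Hm, Ha.
      * split; lra.
    + exists (j true), (j false); split; [apply Hj|split; [apply Hj|apply Hjj]].
Qed.

End Realization.

Theorem lemma4p1 (D : list R) (M : Type) (d : M -> M -> R)
  (A : list M) (s t : M -> R) :
  valid_distset D -> universal D -> in_UD D M d ->
  A <> nil ->
  katetov D d A s -> katetov D d A t ->
  forall m : R,
    in_kat_dist d A s t m <->
    (In m D /\
     max_over (fun x => Rabs (s x - t x)) A <= m /\
     m <= min_over (fun x => s x + t x) A).
Proof.
  intros HD _ HM HA Hs Ht m.
  rewrite max_over_le_iff, le_min_over_iff by exact HA.
  split.
  - intros Hst; destruct HM as [_ [Hd [_ [[Hdin _] _]]]].
    destruct (in_kat_dist_bounds D d A s t m Hd Hdin Hst) as [HmD Hm].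
    split; [exact HmD | split; intros a Ha; apply Hm, Ha].
  - intros [HmD [Hlo Hhi]]; apply (in_kat_dist_of_bounds D M d A HD HM s t m Hs Ht HmD).
    intros a Ha; split; auto.
Qed.
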